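(* Let $g\ge2$, let $C$ be a stable curve of compact type of genus $g$, and let $X$ be an irreducible component of $C$. Let $M$ be an $X$-quasistable line bundle on $C$ of multidegree $\underline d$ (of total degree $d$), and let $M'$ be a line bundle on $C$ of degree $1$ on $X$ and degree $0$ on every other component. Then the line bundle $$M\otimes M'\otimes\mathcal O_C\Big(-\sum_{Z\in\mathcal T_{\underline d}(X)}Z\Big)$$ is $X$-quasistable.
   Context: All curves are connected, projective, reduced, nodal, over an algebraically closed field; $g_C=1-\chi(\mathcal O_C)$. Subcurve: union of irreducible components; $Y'$ is the closure of the complement, $k_Y=\#(Y\cap Y')$. Tail: subcurve $Z$ with $k_Z=1$. Compact type: every node separating. Stable: every smooth rational component meets the rest in $\ge3$ points. Multidegree of $L$: $(\deg L|_{X_i})_i$, total degree $d$, $d_Y=\sum_{X_i\subseteq Y}d_i$. $\deg\omega_C|_Y=2g_Y-2+k_Y$. A multidegree $\underline d$ of total degree $d$ is semistable if $|d_Y-\frac{d}{2g-2}\deg\omega_C|_Y|\le k_Y/2$ for all non-empty proper subcurves $Y$, and $X$-quasistable if in addition $d_Y-\frac{d}{2g-2}\deg\omega_C|_Y>-k_Y/2$ for every proper subcurve $Y\supseteq X$; a line bundle is semistable/$X$-quasistable if its multidegree is. For a tail $Z$ with $Z\cap Z'=\{n\}$, $\mathcal O_C(Z)$ is the line bundle with restrictions $\mathcal O_Z(-n)$ on $Z$ and $\mathcal O_{Z'}(n)$ on $Z'$. Given a multidegree $\underline d$ of total degree $d$, a tail $Z$ is $\underline d$-big if $d_Z\cdot\deg\omega_C-d\cdot\deg(\omega_C|_Z)<2g_Z-g_C$,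 and $\mathcal T_{\underline d}(X)$ is the set of $\underline d$-big tails $Z$ with $X\not\subseteq Z$. *)

(* A compact-type nodal curve is encoded by its dual graph:
   components = vertices of a finType V, nodes = edges of a symmetric
   irreflexive relation e, and gen v = geometric genus of component v. *)
From HB Require Import structures.
From mathcomp Require Import all_boot all_order all_algebra.
Set Implicit Arguments. Unset Strict Implicit. Unset Printing Implicit Defensive.
Import Order.TTheory GRing.Theory Num.Theory.
Local Open Scope ring_scope.

Section CurveComb.
Variables (V : finType) (e : rel V) (gen : V -> nat).

Definition compact_type : Prop :=
  (forall u v : V, connect e u v) /\
  (forall u v : V, e u v ->
     ~~ connect [rel a b | e a b && ~~ (((a == u) && (b == v)) || ((a == v) && (b == u)))] u v).

Definition stable_curve : Prop :=
  forall v : V, gen v = 0%N -> (3 <= #|[set w | e v w]|)%N.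

(* number of nodes of C lying on two components of Y (e symmetric: each
   node counted twice among ordered pairs) *)
Definition nodes_in (Y : {set V}) : nat :=
  (#|[set p : V * V | [&& p.1 \in Y, p.2 \in Y & e p.1 p.2]]| %/ 2)%N.

Definition kY (Y : {set V}) : nat :=
  #|[set p : V * V | [&& p.1 \in Y, p.2 \notin Y & e p.1 p.2]]|.

(* g_Y = 1 - chi(O_Y) = sum_{X_i in Y} g_i - #Y + #nodes in Y + 1 *)
Definition genus_sub (Y : {set V}) : int :=
  (\sum_(v in Y) gen v)%N%:Z - (#|Y|)%:Z + (nodes_in Y)%:Z + 1.

Definition genusC : int := genus_sub setT.

(* deg omega_C|_Y = 2 g_Y - 2 + k_Y *)
Definition degw (Y : {set V}) : int := 2 * genus_sub Y - 2 + (kY Y)%:Z.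

Definition degS (d : V -> int) (Y : {set V}) : int := \sum_(v in Y) d v.
Definition total (d : V -> int) : int := degS d setT.

Definition discr (d : V -> int) (Y : {set V}) : rat :=
  (degS d Y)%:~R - (total d)%:~R / (2 * genusC - 2)%:~R * (degw Y)%:~R.

Definition semistable (d : V -> int) : Prop :=
  forall Y : {set V}, Y != set0 -> Y != setT ->
    `|discr d Y| <= (kY Y)%:R / 2.

Definition quasistable (X : V) (d : V -> int) : Prop :=
  semistable d /\
  forall Y : {set V}, X \in Y -> Y != setT -> - ((kY Y)%:R / 2) < discr d Y.

Definition is_tail (Z : {set V}) : bool := kY Z == 1%N.

Definition big_tail (d : V -> int) (Z : {set V}) : bool :=
  is_tail Z &&
  (degS d Z * (2 * genusC - 2) - total d * degw Z < 2 * genus_sub Z - genusC).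

Definition big_tails (d : V -> int) (X : V) : {set {set V}} :=
  [set Z | big_tail d Z & X \notin Z].

(* multidegree of O_C(Z): on Z, minus the number of nodes joining v to Z';
   on Z', the number of nodes joining v to Z.  For a tail this is
   -1 at the component of Z through n, +1 at the component of Z' through n. *)
Definition tailDeg (Z : {set V}) (v : V) : int :=
  if v \in Z then - (#|[set w | (w \notin Z) && e v w]|)%:Z
  else (#|[set w | (w \in Z) && e v w]|)%:Z.

Definition unitDeg (X : V) (v : V) : int := (v == X)%:Z.

(* multidegree of M (x) M' (x) O_C(- sum_{Z in T_d(X)} Z) *)
Definition twisted (X : V) (d : V -> int) (v : V) : int :=
  d v + unitDeg X v - \sum_(Z in big_tails d X) tailDeg Z v.

End CurveComb.

(* The dual graph of a curve of compact type is a tree.  For an oriented node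
   (u, b) let [branch u b] be the set of components reachable from b without
   passing through u: it is a tail whose only node is (b, u), and its
   complement is [branch b u].  For a multidegree f put
   [excess f v = f_v - deg f / (2g-2) * deg omega_C|_v]; then
   [discr f Y = sum_(v in Y) excess f v] and the excesses sum to zero.
   Cutting the tree along the nodes leaving Y expresses [discr f Y] as minus
   the sum of the discrepancies of the branches hanging off Y, so
   (quasi)stability only has to be checked on branches ([branch_semistable],
   [branch_quasistable]).  On a branch T avoiding X, the twist by the big
   tails changes the degree by [T is big] (no other big tail avoiding X meets
   the degree of T, [tail_degree_on_tail]) and the total degree by 1, whence
   [discr f' T = discr d T + [T big] - w_T/(2g-2)] with [0 < w_T < 2g-2] by
   stability, and [T] is big exactly when [discr d T < w_T/(2g-2) - 1/2].
   An elementary rounding inequality then puts [discr f' T] in [-1/2, 1/2);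
   branches containing X are complements of such branches. *)
From Pilot Require Import Defs.
From HB Require Import structures.
From mathcomp Require Import all_boot all_order all_algebra.
From mathcomp Require Import ring lra.
Set Implicit Arguments. Unset Strict Implicit. Unset Printing Implicit Defensive.
Import Order.TTheory GRing.Theory Num.Theory.
Local Open Scope ring_scope.

Lemma sum_indicator (T : finType) (A : {set T}) z :
  \sum_(v in A) ((v == z)%:Z : int) = (z \in A)%:Z.
Proof.
case zA: (z \in A).
  by rewrite (bigD1 z) //= eqxx big1 ?addr0 // => v /andP[_ /negbTE ->].
by apply: big1 => v vA; case: eqP vA zA => // -> ->.
Qed.

Lemma sum_setT (T : finType) (R : nmodType) (F : T -> R) :
  \sum_(v in [set: T]) F v = \sum_v F v.
Proof. by apply: eq_bigl => v; rewrite in_setT. Qed.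

Lemma halves (R : unitRingType) n : (1 / 2 : R) *+ n = n%:R / 2.
Proof. by rewrite -(mulr_natl (1 / 2) n) mulrA mulr1. Qed.

Lemma rounding_step (R : realFieldType) (a t : R) (b : bool) :
  -(1 / 2) <= a -> a < 1 / 2 -> 0 < t -> t < 1 -> b = (a < t - 1 / 2) ->
  -(1 / 2) <= a + b%:R - t /\ a + b%:R - t < 1 / 2.
Proof. by move=> ? ? ? ? ->; case: ltrP => /= ?; split; lra. Qed.

Section CompactType.
Variables (V : finType) (e : rel V).
Hypothesis e_sym : symmetric e.
Hypothesis e_irr : irreflexive e.

Definition edge_removed (u v : V) : rel V :=
  [rel a b | e a b && ~~ (((a == u) && (b == v)) || ((a == v) && (b == u)))].

Hypothesis e_connected : forall u v : V, connect e u v.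
Hypothesis e_separating : forall u v : V, e u v -> ~~ connect (edge_removed u v) u v.

Definition vertex_removed (u : V) : rel V :=
  [rel x y | [&& e x y, x != u & y != u]].

Definition branch (u b : V) : {set V} := [set w | connect (vertex_removed u) b w].

Definition cross (Y : {set V}) : {set V * V} :=
  [set p : V * V | [&& p.1 \in Y, p.2 \notin Y & e p.1 p.2]].

Lemma kYE (Y : {set V}) : kY e Y = #|cross Y|. Proof. by []. Qed.

Lemma cross_edge (Y : {set V}) p : p \in cross Y -> e p.1 p.2.
Proof. by rewrite inE => /and3P[]. Qed.

Lemma edge_neq x y : e x y -> x != y.
Proof. by apply: contraTneq => ->; rewrite e_irr. Qed.

Lemma vertex_removed_sym u : symmetric (vertex_removed u).
Proof.
move=> x y; rewrite /vertex_removed /= e_sym.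
by case: (e y x) (x != u) (y != u) => [] [] [].
Qed.

Lemma edge_removed_sym u v : symmetric (edge_removed u v).
Proof.
move=> x y; rewrite /edge_removed /= e_sym.
by case: (x == u) (y == v) (x == v) (y == u) => [] [] [] []; rewrite ?andbF.
Qed.

Lemma connect_subrel (r1 r2 : rel V) x y :
  subrel r1 r2 -> connect r1 x y -> connect r2 x y.
Proof. by move=> sub; apply: connect_sub => a b /sub; apply: connect1. Qed.

Lemma exit_node (Y : {set V}) x c : x \in Y -> c \notin Y ->
  exists a b, [/\ a \in Y, b \notin Y, e a b & connect (vertex_removed b) a x].
Proof.
move=> xY cY; case/connectP: (e_connected x c) => p.
elim: p x xY => [|y p IH] x xY /=; first by move=> _ eq; rewrite eq xY in cY.
case/andP=> exy py lastc; case yY: (y \in Y); last first.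
  by exists x, y; rewrite yY exy; split => //; apply: connect0.
have [a [b [aY bY eab cab]]] := IH y yY py lastc.
exists a, b; split => //; apply: connect_trans cab (connect1 _).
by rewrite /vertex_removed /= e_sym exy /=; apply/andP; split; apply: contraNneq bY => <-.
Qed.

Lemma cross_set0 (W : {set V}) x : cross W = set0 -> x \notin W -> W = set0.
Proof.
move=> W0 xW; apply/eqP/set0Pn => -[y yW].
have [a [b [aW bW eab _]]] := exit_node yW xW.
have : (a, b) \in cross W by rewrite inE /= aW bW eab.
by rewrite W0 inE.
Qed.

Lemma branch_self u b : b \in branch u b.
Proof. by rewrite inE connect0. Qed.

Lemma branch_closed u b x y :
  x \in branch u b -> vertex_removed u x y -> y \in branch u b.
Proof. by rewrite !inE => cx dxy; apply: connect_trans cx (connect1 dxy). Qed.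

Lemma notin_branch u b : b != u -> u \notin branch u b.
Proof.
move=> bu; rewrite inE; apply/negP; case/connectP=> p.
case/lastP: p => [|q y] /=; first by move=> _ ub; rewrite ub eqxx in bu.
rewrite rcons_path last_rcons => /andP[_ /and3P[_ _ yu]] uy.
by rewrite -uy eqxx in yu.
Qed.

Lemma vertex_removed_edge_removed u b r :
  (r == u) || (r == b) -> subrel (vertex_removed r) (edge_removed u b).
Proof.
move=> r_end x y; move: r_end.
rewrite /vertex_removed /edge_removed /= => /orP[] /eqP <- /and3P[-> xr yr] /=;
by rewrite negb_or !negb_and (negbTE xr) (negbTE yr) !orbT.
Qed.

Lemma node_separates u b : e u b -> ~~ connect (edge_removed u b) b u.
Proof.
move=> eub; apply/negP => c; move/negP: (e_separating eub); apply.
by rewrite (sym_connect_sym (@edge_removed_sym u b)).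
Qed.

Lemma branches_disjoint u a b w : e u a -> e u b -> a != b ->
  w \in branch u a -> w \in branch u b -> False.
Proof.
move=> eua eub ab; rewrite !inE => ca cb.
rewrite (sym_connect_sym (@vertex_removed_sym u)) in cb.
have cab : connect (edge_removed u a) a b.
  apply: connect_subrel (connect_trans ca cb).
  by apply: vertex_removed_edge_removed; rewrite eqxx.
have cau : connect (edge_removed u a) a u.
  apply: connect_trans cab (connect1 _).
  rewrite /edge_removed /= e_sym eub /= negb_or !negb_and.
  by rewrite !(eq_sym b) ab edge_neq.
by move/negP: (node_separates eua); apply.
Qed.

Lemma branch_cover u w : w != u -> exists2 b, e u b & w \in branch u b.
Proof.
move=> wu; have wY : w \in [set x | x != u] by rewrite inE.
have uY : u \notin [set x | x != u] by rewrite inE negbK.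
have [a [b [aY bY eab cab]]] := exit_node wY uY.
move: aY bY; rewrite !inE negbK => au /eqP bu; subst b.
by exists a; rewrite ?inE // e_sym.
Qed.

(* The two branches at a node are disjoint, because the node separates. *)
Lemma opposite_branches_disjoint u b w :
  e u b -> w \in branch b u -> w \notin branch u b.
Proof.
move=> eub; rewrite !inE => c1; apply/negP => c2.
have h1 : connect (edge_removed u b) u w.
  by apply: connect_subrel c1; apply: vertex_removed_edge_removed; rewrite eqxx orbT.
have h2 : connect (edge_removed u b) b w.
  by apply: connect_subrel c2; apply: vertex_removed_edge_removed; rewrite eqxx.
rewrite (sym_connect_sym (@edge_removed_sym u b)) in h2.
by move/negP: (e_separating eub); apply; apply: connect_trans h1 h2.
Qed.

(* ... and they cover everything: a path from w to u leaving both would have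
   to cross into one of them through a node other than (u, b). *)
Lemma opposite_branches_cover u b w :
  e u b -> w \notin branch u b -> w \in branch b u.
Proof.
move=> eub wn; have bu : b != u by rewrite eq_sym edge_neq.
apply/negPn/negP => wn2.
have wY : w \in ~: (branch u b :|: branch b u).
  by rewrite in_setC in_setU negb_or; apply/andP; split => //; apply/negP.
have uY : u \notin ~: (branch u b :|: branch b u).
  by rewrite in_setC in_setU negbK branch_self orbT.
have [a [c [aY cY eac _]]] := exit_node wY uY.
move: aY cY; rewrite !in_setC !in_setU negb_or negbK => /andP[a1 a2] /orP[] cT.
  have cu : c != u by apply: contraTneq cT => ->; rewrite notin_branch.
  have au : a != u by apply: contraNneq a2 => ->; rewrite branch_self.
  have dca : vertex_removed u c a by rewrite /vertex_removed /= e_sym eac cu au.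
  by move: a1; rewrite (branch_closed cT dca).
have cb : c != b by apply: contraTneq cT => ->; rewrite notin_branch // eq_sym.
have ab : a != b by apply: contraNneq a1 => ->; rewrite branch_self.
have dca : vertex_removed b c a by rewrite /vertex_removed /= e_sym eac cb ab.
by move: a2; rewrite (branch_closed cT dca).
Qed.

Lemma branch_compl u b : e u b -> branch b u = ~: branch u b.
Proof.
move=> eub; apply/setP => w; rewrite in_setC; apply/idP/idP.
  exact: opposite_branches_disjoint.
exact: opposite_branches_cover.
Qed.

Lemma cross_branch u b : e u b -> cross (branch u b) = [set (b, u)].
Proof.
move=> eub; have bu : b != u by rewrite eq_sym edge_neq.
apply/setP => [[x y]]; rewrite /cross in_set in_set1 /= xpair_eqE; apply/idP/idP.
  case/and3P=> xT yT exy.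
  have xu : x != u by apply: contraTneq xT => ->; rewrite notin_branch.
  case: (eqVneq y u) => [yu|yu]; last first.
    have dxy : vertex_removed u x y by rewrite /vertex_removed /= exy xu yu.
    by move: yT; rewrite (branch_closed xT dxy).
  subst y; rewrite andbT; apply/negPn/negP => xb.
  by apply: (@branches_disjoint u x b x); rewrite ?branch_self // e_sym.
by case/andP=> /eqP -> /eqP ->; rewrite branch_self notin_branch //= e_sym.
Qed.

Lemma kY_branch u b : e u b -> kY e (branch u b) = 1%N.
Proof. by move=> eub; rewrite kYE cross_branch // cards1. Qed.

Lemma branch_proper u b : e u b -> branch u b != set0 /\ branch u b != setT.
Proof.
move=> eub; split; first by apply/set0Pn; exists b; apply: branch_self.
apply/negP => /eqP T_full; have bu : b != u by rewrite eq_sym edge_neq.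
by move: (notin_branch bu); rewrite T_full in_setT.
Qed.

Section ZeroMassWeight.
Variables (R : realFieldType) (nu : V -> R).
Hypothesis nu_mass0 : \sum_v nu v = 0.

Lemma branches_partition u w :
  \sum_(b | e u b) (if w \in branch u b then nu w else 0) = if w == u then 0 else nu w.
Proof.
case: (eqVneq w u) => [->|wu].
  by apply: big1 => b eub; rewrite (negbTE (notin_branch _)) // eq_sym edge_neq.
have [b0 eub0 wT] := branch_cover wu.
rewrite (bigD1 b0) //= wT big1 ?addr0 // => b /andP[eub bb0].
by case: ifP => // wb; case: (branches_disjoint eub eub0 bb0 wb wT).
Qed.

Lemma mass_vertex u : nu u = - \sum_(b | e u b) \sum_(w in branch u b) nu w.
Proof.
under eq_bigr do rewrite big_mkcond.
rewrite exchange_big /=; under eq_bigr do rewrite branches_partition.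
rewrite (bigD1 u) //= eqxx add0r; move: nu_mass0; rewrite (bigD1 u) //= => H0.
under eq_bigr => i /negbTE iu do rewrite iu.
by apply/eqP; rewrite -addr_eq0 H0.
Qed.

Lemma mass_opposite_branch u b : e u b ->
  \sum_(w in branch b u) nu w = - \sum_(w in branch u b) nu w.
Proof.
move=> eub; rewrite branch_compl //.
move/eqP: nu_mass0; rewrite (bigID (mem (branch u b))) /= addr_eq0 => /eqP ->.
by rewrite opprK; apply: eq_bigl => v; rewrite inE.
Qed.

(* Summing [mass_vertex] over Y, the branches along nodes inside Y cancel
   in pairs by [mass_opposite_branch]. *)
Lemma mass_subcurve (Y : {set V}) :
  \sum_(v in Y) nu v = - \sum_(p in cross Y) \sum_(w in branch p.1 p.2) nu w.
Proof.
transitivity (- \sum_(v in Y) \sum_(b | e v b) \sum_(w in branch v b) nu w).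
  by rewrite -sumrN; apply: eq_bigr => v _; rewrite -mass_vertex.
rewrite pair_big_dep (bigID (fun p : V * V => p.2 \in Y)) /=.
set J := \sum_(i | _ && _ && _) _.
have J_opp : J = - J.
  rewrite {1}/J (reindex_inj (h := fun p : V * V => (p.2, p.1))); last first.
    by apply: inv_inj => -[].
  rewrite /J /= -sumrN; apply: eq_big => [p|p].
    by rewrite e_sym; case: (p.1 \in Y) (p.2 \in Y) (e p.1 p.2) => [] [] [].
  by case/andP=> /andP[_ ep] _; rewrite mass_opposite_branch // e_sym.
have -> : J = 0.
  have : J *+ 2 = 0 by rewrite mulr2n {1}J_opp addNr.
  by move/eqP; rewrite mulrn_eq0 /= => /eqP.
rewrite add0r; congr (- _); apply: eq_bigl => p; rewrite inE.
by case: (p.1 \in Y) (p.2 \in Y) (e p.1 p.2) => [] [] [].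
Qed.

Lemma branch_semistable :
  (forall u b, e u b -> `|\sum_(w in branch u b) nu w| <= 1 / 2) ->
  forall Y : {set V}, `|\sum_(v in Y) nu v| <= (#|cross Y|)%:R / 2.
Proof.
move=> nu_branch Y; rewrite mass_subcurve normrN; apply: le_trans (ler_norm_sum _ _ _) _.
apply: (@le_trans _ _ (\sum_(p in cross Y) (1 / 2 : R))).
  by apply: ler_sum => p /cross_edge; apply: nu_branch.
by rewrite sumr_const halves.
Qed.

(* ... and strict bounds on the branches avoiding X give the strict
   quasistability bound on subcurves containing X: such a subcurve has a
   leaving node whose far branch avoids X. *)
Lemma branch_quasistable X :
  (forall u b, e u b -> `|\sum_(w in branch u b) nu w| <= 1 / 2) ->
  (forall u b, e u b -> X \notin branch u b -> \sum_(w in branch u b) nu w < 1 / 2) ->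
  forall Y : {set V}, X \in Y -> Y != setT ->
    - ((#|cross Y|)%:R / 2) < \sum_(v in Y) nu v.
Proof.
move=> nu_branch nu_far Y XY YT.
have /subsetPn [c _ cY] : ~~ (setT \subset Y) by rewrite subTset.
have [a [b [aY bY eab cab]]] := exit_node XY cY.
have XT : X \notin branch a b.
  by rewrite -in_setC -(branch_compl eab) inE.
have ab_cross : (a, b) \in cross Y by rewrite inE /= aY bY eab.
rewrite mass_subcurve ltrN2 -halves -sumr_const.
rewrite (bigD1 (a, b)) //= [X in _ < X](bigD1 (a, b)) //=.
apply: ltr_leD; first exact: nu_far.
apply: ler_sum => p /andP[/cross_edge ep _].
by have := nu_branch _ _ ep; rewrite ler_norml => /andP[].
Qed.

End ZeroMassWeight.

Lemma tail_node (Z : {set V}) : kY e Z = 1%N -> exists z0 z1, cross Z = [set (z0, z1)].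
Proof. by rewrite kYE => /eqP/cards1P [[z0 z1] ->]; exists z0, z1. Qed.

Section TailNode.
Variables (Z : {set V}) (z0 z1 : V).
Hypothesis Z_node : cross Z = [set (z0, z1)].

Lemma tail_node_mem : [/\ z0 \in Z, z1 \notin Z & e z0 z1].
Proof.
have : (z0, z1) \in cross Z by rewrite Z_node in_set1.
by rewrite inE => /and3P[].
Qed.

Lemma tail_node_unique x y : x \in Z -> y \notin Z -> e x y -> x = z0 /\ y = z1.
Proof.
move=> xZ yZ exy; have : (x, y) \in cross Z by rewrite inE /= xZ yZ exy.
by rewrite Z_node in_set1 xpair_eqE => /andP[/eqP -> /eqP ->].
Qed.

Lemma tailDeg_tail v : tailDeg e Z v = (v == z1)%:Z - (v == z0)%:Z.
Proof.
have [z0Z z1Z ez] := tail_node_mem.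
rewrite /tailDeg; case: ifP => vZ.
  have -> : (v == z1) = false by apply/negbTE; apply: contraNneq z1Z => <-.
  rewrite sub0r; congr (- Posz _); case: (eqVneq v z0) => [->|vz0].
    rewrite -[RHS]/1%N -(cards1 z1); apply: eq_card => w; rewrite !inE.
    apply/idP/idP; last by move/eqP ->; rewrite z1Z ez.
    by case/andP => wZ ew; have [_ ->] := tail_node_unique z0Z wZ ew.
  apply/eqP; rewrite cards_eq0; apply/eqP/setP => w; rewrite !inE.
  apply/negP => /andP[wZ ew]; have [vz _] := tail_node_unique vZ wZ ew.
  by rewrite vz eqxx in vz0.
have -> : (v == z0) = false by apply/negbTE; apply: contraFneq vZ => ->.
rewrite subr0; congr (Posz _); case: (eqVneq v z1) => [->|vz1].
  rewrite -[RHS]/1%N -(cards1 z0); apply: eq_card => w; rewrite !inE.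
  apply/idP/idP; last by move/eqP ->; rewrite z0Z e_sym ez.
  by case/andP => wZ ew; rewrite e_sym in ew; have [-> _] := tail_node_unique wZ z1Z ew.
apply/eqP; rewrite cards_eq0; apply/eqP/setP => w; rewrite !inE.
apply/negP => /andP[wZ ew]; rewrite e_sym in ew.
have [_ vz] := tail_node_unique wZ (negbT vZ) ew.
by rewrite vz eqxx in vz1.
Qed.

Lemma degS_tailDeg (Y : {set V}) : degS (tailDeg e Z) Y = (z1 \in Y)%:Z - (z0 \in Y)%:Z.
Proof.
by rewrite /degS; under eq_bigr do rewrite tailDeg_tail; rewrite sumrB !sum_indicator.
Qed.

End TailNode.

(* Two tails avoiding X with the same leaving node: the first is contained in
   the second, since otherwise Y minus Z would be a nonempty subcurve avoiding
   X with no leaving node. *)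
Lemma tails_same_node (Y Z : {set V}) a b X : cross Y = [set (a, b)] ->
  cross Z = [set (a, b)] -> X \notin Y -> Y \subset Z.
Proof.
move=> Y_node Z_node XY; rewrite -setD_eq0; apply/eqP.
have [aY bY eab] := tail_node_mem Y_node; have [aZ bZ _] := tail_node_mem Z_node.
apply: (cross_set0 (x := X)); last by rewrite in_setD (negbTE XY) andbF.
apply/setP => -[p q]; rewrite inE in_set0 /= !in_setD; apply/negP.
case/and3P => /andP[pZ pY] qYZ epq; case qY: (q \in Y).
  move: qYZ; rewrite qY andbT negbK => qZ.
  rewrite e_sym in epq; have [_ pb] := tail_node_unique Z_node qZ pZ epq.
  by rewrite -pb pY in bY.
have [pa _] := tail_node_unique Y_node pY (negbT qY) epq.
by rewrite pa aZ in pZ.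
Qed.

(* If exactly one end of the node of Z lies on Y, either that node
   also leaves Y, and then Y = Z, or Y and Z together would form a nonempty
   subcurve avoiding X without leaving nodes. *)
Lemma tail_degree_on_tail (Y Z : {set V}) X : kY e Y = 1%N -> kY e Z = 1%N ->
  X \notin Y -> X \notin Z -> degS (tailDeg e Z) Y = - (Z == Y)%:Z.
Proof.
move=> /tail_node [y0 [y1 Y_node]] /tail_node [z0 [z1 Z_node]] XY XZ.
rewrite (degS_tailDeg Z_node).
have [z0Z z1Z ez] := tail_node_mem Z_node; have [y0Y y1Y ey] := tail_node_mem Y_node.
case z0Y: (z0 \in Y); case z1Y: (z1 \in Y).
- have -> : (Z == Y) = false.
    by apply/negbTE; apply: contraNneq z1Z => ->; rewrite z1Y.
  by rewrite subrr oppr0.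
- have [e0 e1] := tail_node_unique Y_node z0Y (negbT z1Y) ez; subst y0 y1.
  suff -> : Z = Y by rewrite eqxx.
  by apply/eqP; rewrite eqEsubset (tails_same_node Y_node Z_node XY)
    (tails_same_node Z_node Y_node XZ).
- exfalso; rewrite e_sym in ez.
  have [e0 e1] := tail_node_unique Y_node z1Y (negbT z0Y) ez; subst y0 y1.
  have : Y :|: Z = set0.
    apply: (cross_set0 (x := X)); last by rewrite in_setU negb_or XY XZ.
    apply/setP => -[p q]; rewrite inE in_set0 /= !in_setU negb_or; apply/negP.
    case/and3P => /orP[pY|pZ] /andP[qY qZ] epq.
      by have [_ qe] := tail_node_unique Y_node pY qY epq; rewrite qe z0Z in qZ.
    by have [_ qe] := tail_node_unique Z_node pZ qZ epq; rewrite qe z1Y in qY.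
  by move/setP/(_ z0); rewrite in_setU z0Z orbT in_set0.
- have -> : (Z == Y) = false.
    by apply/negbTE; apply: contraTneq z0Z => ->; rewrite z0Y.
  by rewrite subrr oppr0.
Qed.

Lemma handshake (Y : {set V}) :
  ((nodes_in e Y).*2 + kY e Y)%N = (\sum_(v in Y) #|[set w | e v w]|)%N.
Proof.
set P := [set p : V * V | [&& p.1 \in Y, p.2 \in Y & e p.1 p.2]].
pose lower (p : V * V) := (enum_rank p.1 < enum_rank p.2)%N.
have P_even : #|P| = (#|[set p in P | lower p]|).*2.
  rewrite -addnn -sum1_card (bigID lower) /= -sum1_card; congr (_ + _)%N.
    by apply: eq_bigl => p; rewrite inE.
  rewrite (reindex_inj (h := fun p : V * V => (p.2, p.1))); last by apply: inv_inj => -[].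
  apply: eq_bigl => -[x y] /=; rewrite !inE /=.
  case exy: (e x y); last by rewrite e_sym exy !andbF.
  rewrite e_sym exy /lower /=; case: (x \in Y) (y \in Y) => [] [] //=.
  have xy : (nat_of_ord (enum_rank x) == enum_rank y) = false.
    apply/negbTE; apply: contraTneq exy => /val_inj/enum_rank_inj ->.
    by rewrite e_irr.
  by rewrite -leqNgt leq_eqVlt xy.
rewrite /nodes_in -/P P_even divn2 doubleK -P_even.
have -> : (\sum_(v in Y) #|[set w | e v w]|)%N = (\sum_(v in Y) \sum_(w | e v w) 1)%N.
  by apply: eq_bigr => v _; rewrite -sum1_card; apply: eq_bigl => w; rewrite inE.
rewrite pair_big_dep /= (bigID (fun p : V * V => p.2 \in Y)) /= kYE.
by congr (_ + _)%N; rewrite -sum1_card; apply: eq_bigl => p; rewrite inE;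
  case: (p.1 \in Y) (p.2 \in Y) (e p.1 p.2) => [] [] [].
Qed.

Variable gen : V -> nat.

Definition wdeg (v : V) : int := (2 * gen v + #|[set w | e v w]|)%N%:Z - 2.

Lemma degw_wdeg (Y : {set V}) : degw e gen Y = \sum_(v in Y) wdeg v.
Proof.
rewrite /degw /genus_sub sumrB sumr_const.
have -> : \sum_(v in Y) ((2 * gen v + #|[set w | e v w]|)%N%:Z) =
          ((2 * \sum_(v in Y) gen v) + ((nodes_in e Y).*2 + kY e Y))%N%:Z.
  rewrite handshake big_distrr -big_split /= -natz natr_sum.
  by apply: eq_bigr => v _; rewrite natz.
rewrite -(mulr_natr (2:int) #|Y|) -muln2 !PoszD !PoszM; ring.
Qed.

Hypothesis gen_stable : stable_curve e gen.
Hypothesis genus_ge2 : 2 <= genusC e gen.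

Definition Ndeg : int := 2 * genusC e gen - 2.

Definition excess (f : V -> int) (v : V) : rat :=
  (f v)%:~R - (Defs.total f)%:~R / Ndeg%:~R * (wdeg v)%:~R.

Lemma Ndeg_gt0 : 0 < (Ndeg%:~R : rat).
Proof.
rewrite ltr0z /Ndeg subr_gt0; apply: (@lt_le_trans _ _ (2 * 2)) => //.
by rewrite ler_pM2l.
Qed.

Lemma discr_excess f (Y : {set V}) : discr e gen f Y = \sum_(v in Y) excess f v.
Proof.
rewrite /discr -/Ndeg degw_wdeg /degS rmorph_sum [X in _ * X]rmorph_sum.
by rewrite mulr_sumr -sumrB.
Qed.

Lemma degw_setT : degw e gen setT = Ndeg.
Proof.
rewrite /degw kYE (_ : cross setT = set0) ?cards0 ?addr0 //.
by apply/setP => p; rewrite !inE andbF.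
Qed.

Lemma excess_mass0 f : \sum_v excess f v = 0.
Proof.
by rewrite -sum_setT -discr_excess /discr degw_setT divfK ?subrr // gt_eqF // Ndeg_gt0.
Qed.

Lemma degS_twisted X d (Y : {set V}) :
  degS (twisted e gen X d) Y =
  degS d Y + (X \in Y)%:Z - \sum_(Z in big_tails e gen d X) degS (tailDeg e Z) Y.
Proof.
rewrite /degS /twisted sumrB big_split /= exchange_big.
by rewrite /unitDeg sum_indicator.
Qed.

Lemma big_tail_avoids X d Z : Z \in big_tails e gen d X -> kY e Z = 1%N /\ X \notin Z.
Proof. by rewrite inE => /andP[/andP[/eqP kZ _] XZ]. Qed.

(* M' raises the total degree by one; each O_C(-Z) leaves it unchanged. *)
Lemma total_twisted X d : Defs.total (twisted e gen X d) = Defs.total d + 1.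
Proof.
rewrite /Defs.total degS_twisted in_setT big1 ?subr0 // => Z /big_tail_avoids [kZ _].
have [z0 [z1 Z_node]] := tail_node kZ.
by rewrite (degS_tailDeg Z_node) !in_setT subrr.
Qed.

Lemma degS_twisted_branch X d u b : e u b -> X \notin branch u b ->
  degS (twisted e gen X d) (branch u b) =
  degS d (branch u b) + (branch u b \in big_tails e gen d X)%:Z.
Proof.
move=> eub XT; rewrite degS_twisted (negbTE XT) addr0.
under eq_bigr => Z /big_tail_avoids [kZ XZ].
  rewrite (tail_degree_on_tail (kY_branch eub) kZ XT XZ).
over.
by rewrite sumrN sum_indicator opprK.
Qed.

Lemma has_node u b v : e u b -> exists w, e v w.
Proof.
move=> eub; case: (eqVneq v u) => [->|vu]; first by exists b.
case/connectP: (e_connected v u) => -[|w p] /=.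
  by move=> _ uv; rewrite uv eqxx in vu.
by case/andP => evw _ _; exists w.
Qed.

Lemma wdeg_ge1 v : (exists w, e v w) -> 1 <= wdeg v.
Proof.
move=> [w evw]; rewrite /wdeg lerBrDr (_ : 1 + 2 = 3%:Z) // lez_nat.
have val_gt0 : (0 < #|[set w | e v w]|)%N by apply/card_gt0P; exists w; rewrite inE.
case g0: (gen v) => [|g]; first by rewrite muln0 add0n; apply: gen_stable.
rewrite mulnS -addnA (_ : 3 = 2 + 1)%N // leq_add2l.
exact: leq_trans val_gt0 (leq_addl _ _).
Qed.

Lemma wdeg_sum_ge1 u b (A : {set V}) x : e u b -> x \in A -> 1 <= \sum_(v in A) wdeg v.
Proof.
move=> eub xA; rewrite (bigD1 x) //= -[1]addr0.
have wdeg_pos v : 1 <= wdeg v by apply/wdeg_ge1/(has_node v eub).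
by apply: lerD => //; apply: sumr_ge0 => v _; apply: le_trans (wdeg_pos v).
Qed.

Lemma degw_branch_bounds u b : e u b ->
  0 < degw e gen (branch u b) /\ degw e gen (branch u b) < Ndeg.
Proof.
move=> eub; have bu : b != u by rewrite eq_sym edge_neq.
rewrite degw_wdeg; split; first exact: lt_le_trans ltr01 (wdeg_sum_ge1 eub (branch_self u b)).
rewrite -degw_setT degw_wdeg sum_setT [X in _ < X](bigID (mem (branch u b))) /= ltrDl.
have := wdeg_sum_ge1 (x := u) (A := ~: branch u b) eub.
rewrite in_setC notin_branch // => /(_ isT).
by rewrite (eq_bigl _ _ (fun v => in_setC v _)); apply: lt_le_trans.
Qed.

(* The bigness test of the paper, rewritten for a branch T avoiding X:
   since deg omega_C|_T = 2 g_T - 1 and 2g - 2 = deg omega_C, T is big iff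
   its discrepancy is below deg omega_C|_T / (2g-2) - 1/2. *)
Lemma big_branchE X d u b : e u b -> X \notin branch u b ->
  (branch u b \in big_tails e gen d X) =
  (discr e gen d (branch u b) < (degw e gen (branch u b))%:~R / Ndeg%:~R - 1 / 2).
Proof.
move=> eub XT; set T := branch u b.
rewrite inE /big_tail /is_tail kY_branch // eqxx XT andbT /= -/Ndeg.
have N_neq0 : 2%:~R * (genusC e gen)%:~R - 2%:~R != 0 :> rat.
  by move: Ndeg_gt0; rewrite /Ndeg !(rmorphB, rmorphM) /= => /gt_eqF ->.
have degwT : (degw e gen T)%:~R = 2 * (genus_sub e gen T)%:~R - 1 :> rat.
  by rewrite /degw kY_branch // !(rmorphB, rmorphD, rmorphM) /=; ring.
rewrite -(ltr_int rat) -[RHS](ltr_pM2r Ndeg_gt0) /discr /Ndeg.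
by congr (_ < _); rewrite !(rmorphB, rmorphM) /= degwT; field.
Qed.

Lemma discr_twisted_branch X d u b : e u b -> X \notin branch u b ->
  discr e gen (twisted e gen X d) (branch u b) =
  discr e gen d (branch u b) + (branch u b \in big_tails e gen d X)%:R
    - (degw e gen (branch u b))%:~R / Ndeg%:~R.
Proof.
move=> eub XT; rewrite /discr -/Ndeg total_twisted degS_twisted_branch //.
rewrite (intrD _ (degS d _)) (intrD _ (Defs.total d)) rmorph1.
by field; rewrite gt_eqF ?Ndeg_gt0.
Qed.

(* Main estimate: the twisted discrepancy of a branch avoiding X lies in
   [-1/2, 1/2).  The bounds for d come from semistability (lower bound) and
   from quasistability applied to the complementary branch, which contains X
   (strict upper bound). *)
Lemma twisted_far_branch X d u b : quasistable e gen X d -> e u b -> X \notin branch u b ->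
  -(1 / 2) <= discr e gen (twisted e gen X d) (branch u b) /\
  discr e gen (twisted e gen X d) (branch u b) < 1 / 2.
Proof.
move=> [d_semi d_quasi] eub XT.
have ebu : e b u by rewrite e_sym.
have [T_neq0 T_neqT] := branch_proper eub.
have d_lower : -(1 / 2) <= discr e gen d (branch u b).
  by have := d_semi _ T_neq0 T_neqT; rewrite kY_branch // ler_norml => /andP[].
have d_upper : discr e gen d (branch u b) < 1 / 2.
  have XT' : X \in branch b u by rewrite (branch_compl eub) inE.
  have := d_quasi _ XT' (branch_proper ebu).2.
  by rewrite kY_branch // !discr_excess (mass_opposite_branch (excess_mass0 d) eub) ltrN2.
have [w_gt0 w_lt] := degw_branch_bounds eub.
rewrite discr_twisted_branch //; apply: rounding_step => //.
- by rewrite divr_gt0 ?Ndeg_gt0 // ltr0z.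
- by rewrite ltr_pdivrMr ?Ndeg_gt0 // mul1r ltr_int.
- exact: big_branchE.
Qed.

(* Hence the twisted excesses satisfy the branch bounds of
   [branch_semistable] and [branch_quasistable]; branches containing X are
   handled through their complements. *)
Lemma twisted_branch_bounds X d : quasistable e gen X d ->
  (forall u b, e u b ->
     `|\sum_(w in branch u b) excess (twisted e gen X d) w| <= 1 / 2) /\
  (forall u b, e u b -> X \notin branch u b ->
     \sum_(w in branch u b) excess (twisted e gen X d) w < 1 / 2).
Proof.
move=> d_quasi; set d' := twisted e gen X d.
have far := twisted_far_branch d_quasi.
split => u b eub; rewrite -discr_excess; last by case/(far u b eub).
rewrite ler_norml; case: (boolP (X \in branch u b)) => XT; last first.
  by case: (far u b eub XT) => lower upper; rewrite lower ltW.
have ebu : e b u by rewrite e_sym.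
have XT' : X \notin branch b u by rewrite (branch_compl eub) inE negbK.
rewrite !discr_excess (mass_opposite_branch (excess_mass0 d') ebu).
have [lower upper] := far b u ebu XT'; rewrite !discr_excess in lower upper.
by rewrite lerN2 (ltW upper) lerNl lower.
Qed.

End CompactType.

Theorem mainTheorem3 (V : finType) (e : rel V) (gen : V -> nat)
  (e_sym : symmetric e) (e_irr : irreflexive e)
  (Hct : compact_type e) (Hst : stable_curve e gen)
  (Hg : 2 <= genusC e gen)
  (X : V) (d : V -> int)
  (HM : quasistable e gen X d) :
  quasistable e gen X (twisted e gen X d).
Proof.
case: Hct => e_connected e_separating.
have mass0 := excess_mass0 e_sym e_irr Hg (twisted e gen X d).
have [branch_le branch_lt] :=
  twisted_branch_bounds e_sym e_irr e_connected e_separating Hst Hg HM.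
split => [Y _ _ | Y XY YT]; rewrite discr_excess // kYE.
  exact: (branch_semistable e_sym e_irr e_connected e_separating mass0 branch_le).
exact: (branch_quasistable e_sym e_irr e_connected e_separating mass0 branch_le branch_lt).
Qed.
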